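(* Let $P$ be a finite poset, $R$ a commutative unital ring, and $D$ a derivation of $I^3(P,R)$. Then for all $x<z<y$ in $P$, $D(e_{xzy})=0$.
   Context: For a finite poset $P$, $P^3_\le=\{(x,y,z)\in P^3: x\le y\le z\}$, and $I^3(P,R)$ is the $R$-module of functions $f:P^3_\le\to R$ with multiplication $(fg)(x_1,x_2,x_3)=\sum f(x_1,y_1,y_2)g(y_1,y_2,x_3)$ over all $x_1\le y_1\le x_2\le y_2\le x_3$. For $x\le y\le z$, $e_{xyz}$ is the function equal to $1$ at $(x,y,z)$ and $0$ elsewhere. A derivation is an $R$-linear map $D:I^3(P,R)\to I^3(P,R)$ with $D(fg)=D(f)g+fD(g)$. *)

From HB Require Import structures.
From mathcomp Require Import all_boot all_order all_algebra.
Set Implicit Arguments. Unset Strict Implicit. Unset Printing Implicit Defensive.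
Import Order.TTheory GRing.Theory.
Local Open Scope order_scope.
Local Open Scope ring_scope.

Section I3.
Variables (d : Order.disp_t) (P : finPOrderType d) (R : comPzRingType).

Definition chain3 (t : P * P * P) : bool := ((t.1.1 <= t.1.2) && (t.1.2 <= t.2))%O.
Definition P3le := {t : P * P * P | chain3 t}.

Local Notation I3 := {ffun P3le -> R^o}.

(* value of f at (x,y,z), or 0 if (x,y,z) is not in P^3_<= (only used
   inside the product, where the triple is always in P^3_<=) *)
Definition at3 (f : I3) (x y z : P) : R :=
  if insub (x, y, z) is Some t then f t else 0.

Definition mul3 (f g : I3) : I3 :=
  [ffun t : P3le =>
     let: (x1, x2, x3) := val t in
     \sum_(y1 : P) \sum_(y2 : P)
        (if [&& (x1 <= y1)%O, (y1 <= x2)%O, (x2 <= y2)%O & (y2 <= x3)%O]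
         then at3 f x1 y1 y2 * at3 g y1 y2 x3 else 0)].

Definition e3 (x y z : P) : I3 := [ffun t : P3le => if val t == (x, y, z) then 1 else 0].

Definition is_derivation (D : I3 -> I3) : Prop :=
  (forall (a : R) (f g : I3), D (a *: f + g) = a *: D f + D g) /\
  (forall f g : I3, D (mul3 f g) = mul3 (D f) g + mul3 f (D g)).

End I3.

Notation I3 P R := {ffun P3le P -> R^o}.

From HB Require Import structures.
From mathcomp Require Import all_boot all_order all_algebra.
Set Implicit Arguments. Unset Strict Implicit. Unset Printing Implicit Defensive.
Import Order.TTheory GRing.Theory.
Local Open Scope ring_scope.
Local Open Scope order_scope.

(* Products of basis elements are explicit: e_{abc} e_{bcd} is the sum of the
   e_{awd} over b <= w <= c, and every other product of two basis elements
   vanishes.  Applying the Leibniz rule to e_{abc} = e_{abb} e_{bbc} shows that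
   D(e_{abc}) is supported on triples with middle entry b.  Evaluating
   D(e_{aac} e_{acc}) at (a,a,c) and at (a,c,c), once by the Leibniz rule and
   once through the sum, forces D(e_{aac})(a,a,c) = D(e_{acc})(a,c,c) = 0;
   differentiating the vanishing products e_{ppz} e_{xzz} (p <> x) and
   e_{zzy} e_{zrr} (r <> y) kills the remaining coefficients of D(e_{xzz}) and
   D(e_{zzy}) that matter.  The Leibniz rule on e_{xzy} = e_{xzz} e_{zzy} then
   gives D(e_{xzy}) = 0, for every chain x <= z <= y. *)

Section Incidence3.
Variables (disp : Order.disp_t) (P : finPOrderType disp) (R : comPzRingType).
Local Notation I := (I3 P R).

Lemma ffun_at3 (f : I) (t : P3le P) : f t = at3 f (val t).1.1 (val t).1.2 (val t).2.
Proof. by rewrite /at3 -!surjective_pairing valK. Qed.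

Lemma at3_nchain (f : I) (p q r : P) : ~~ ((p <= q) && (q <= r)) -> at3 f p q r = 0.
Proof. by move=> nchain; rewrite /at3 insubN. Qed.

Lemma eq_at3 (f g : I) : (forall p q r, at3 f p q r = at3 g p q r) -> f = g.
Proof. by move=> eq_fg; apply/ffunP => t; rewrite !ffun_at3 eq_fg. Qed.

Lemma at30 (p q r : P) : at3 (0 : I) p q r = 0.
Proof. by rewrite /at3; case: insub => [t|]; rewrite ?ffunE. Qed.

Lemma at3D (f g : I) (p q r : P) : at3 (f + g) p q r = at3 f p q r + at3 g p q r.
Proof. by rewrite /at3; case: insub => [t|]; rewrite ?ffunE ?addr0. Qed.

Lemma at3_sum (T : Type) (s : seq T) (Q : pred T) (F : T -> I) (p q r : P) :
  at3 (\sum_(i <- s | Q i) F i) p q r = \sum_(i <- s | Q i) at3 (F i) p q r.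
Proof.
by apply: (big_morph (fun f : I => at3 f p q r)) => [f g|]; rewrite ?at3D ?at30.
Qed.

Lemma at3_e3 (a b c p q r : P) : a <= b -> b <= c ->
  at3 (e3 R a b c) p q r = if (p, q, r) == (a, b, c) then 1 else 0.
Proof.
move=> le_ab le_bc; rewrite /at3; case: insubP => [t _ vt | nchain].
  by rewrite ffunE vt.
by case: eqP nchain => // -[-> -> ->]; rewrite /chain3 /= le_ab le_bc.
Qed.

Lemma at3_mul3 (f g : I) (p q r : P) : at3 (mul3 f g) p q r =
  if (p <= q) && (q <= r) then
    \sum_(y1 : P) \sum_(y2 : P)
      (if [&& (p <= y1)%O, (y1 <= q)%O, (q <= y2)%O & (y2 <= r)%O]
       then at3 f p y1 y2 * at3 g y1 y2 r else 0)
  else 0.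
Proof.
rewrite {1}/at3; case: insubP => [t chain vt | nchain].
  by rewrite ffunE vt [_ && _]chain.
by rewrite [_ && _](negbTE nchain).
Qed.

Lemma sum2_single (F : P -> P -> R) (a b : P) :
  (forall y1 y2, (y1, y2) != (a, b) -> F y1 y2 = 0) ->
  \sum_y1 \sum_y2 F y1 y2 = F a b.
Proof.
move=> F0; rewrite (bigD1 a) //= (bigD1 b) //= !big1 ?addr0 // => [y1 ne_a|y2 ne_b].
  by apply: big1 => y2 _; apply: F0; rewrite xpair_eqE (negbTE ne_a).
by apply: F0; rewrite xpair_eqE (negbTE ne_b) andbF.
Qed.

Lemma at3_mul3_e3r (f : I) (a b c p q r : P) : a <= b -> b <= c ->
  at3 (mul3 f (e3 R a b c)) p q r =
  if [&& r == c, (a <= q)%O & (q <= b)%O] then at3 f p a b else 0.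
Proof.
move=> le_ab le_bc; rewrite at3_mul3 (@sum2_single _ a b) => [|y1 y2 ne]; last first.
  rewrite at3_e3 //; case: eqP => [[eq1 eq2 _]|_]; last by rewrite mulr0 if_same.
  by rewrite eq1 eq2 eqxx in ne.
rewrite at3_e3 // !xpair_eqE !eqxx /=.
have [->|_] := eqVneq r c; last by rewrite mulr0 !if_same.
rewrite mulr1 le_bc andbT /=.
have [le_pa|nle_pa] := boolP (p <= a); last first.
  by rewrite at3_nchain ?negb_and ?nle_pa // !if_same.
have [/andP[le_aq le_qb]|_] := boolP ((a <= q) && (q <= b)); last by rewrite if_same.
by rewrite (le_trans le_pa le_aq) (le_trans le_qb le_bc).
Qed.

Lemma at3_mul3_e3l (g : I) (a b c p q r : P) : a <= b -> b <= c ->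
  at3 (mul3 (e3 R a b c) g) p q r =
  if [&& p == a, (b <= q)%O & (q <= c)%O] then at3 g b c r else 0.
Proof.
move=> le_ab le_bc; rewrite at3_mul3 (@sum2_single _ b c) => [|y1 y2 ne]; last first.
  rewrite at3_e3 //; case: eqP => [[_ eq1 eq2]|_]; last by rewrite mul0r if_same.
  by rewrite eq1 eq2 eqxx in ne.
rewrite at3_e3 // !xpair_eqE !eqxx !andbT.
have [->|_] := eqVneq p a; last by rewrite mul0r !if_same.
rewrite mul1r le_ab /=.
have [le_cr|nle_cr] := boolP (c <= r); last first.
  by rewrite at3_nchain ?negb_and ?nle_cr ?orbT // !andbF !if_same.
rewrite andbT.
have [/andP[le_bq le_qc]|_] := boolP ((b <= q) && (q <= c)); last by rewrite if_same.
by rewrite (le_trans le_ab le_bq) (le_trans le_qc le_cr).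
Qed.

Lemma mul3_e3 (a b c d : P) : a <= b -> b <= c -> c <= d ->
  mul3 (e3 R a b c) (e3 R b c d) = \sum_(w | b <= w <= c) e3 R a w d.
Proof.
move=> le_ab le_bc le_cd; apply: eq_at3 => p q r.
rewrite at3_mul3_e3l // at3_e3 // at3_sum.
rewrite (eq_bigr (fun w => if (p, q, r) == (a, w, d) then 1 else 0)); last first.
  move=> w /andP[le_bw le_wc].
  by rewrite at3_e3 // ?(le_trans le_ab le_bw) ?(le_trans le_wc le_cd).
rewrite !xpair_eqE !eqxx /=.
have [range_q|nrange_q] := boolP ((b <= q) && (q <= c)); last first.
  rewrite andbF big1 // => w range_w.
  by case: eqP => // -[_ eq_qw _]; rewrite eq_qw range_w in nrange_q.
rewrite (bigD1 q) //= big1 ?addr0 => [|w /andP[_ ne_wq]]; last first.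
  by case: eqP => // -[_ eq_qw _]; rewrite eq_qw eqxx in ne_wq.
by rewrite !xpair_eqE !eqxx !andbT; case: (p == a).
Qed.

Lemma mul3_e3_eq0 (a b c a' b' c' : P) : a <= b -> b <= c -> a' <= b' -> b' <= c' ->
  (b, c) != (a', b') -> mul3 (e3 R a b c) (e3 R a' b' c') = 0.
Proof.
move=> le_ab le_bc le_ab' le_bc' ne; apply: eq_at3 => p q r.
by rewrite at3_mul3_e3l // at3_e3 // at30 xpair_eqE (negbTE ne) !if_same.
Qed.

Lemma e3_factor (a b c : P) : a <= b -> b <= c ->
  mul3 (e3 R a b b) (e3 R b b c) = e3 R a b c.
Proof.
move=> le_ab le_bc; rewrite mul3_e3 ?lexx //.
by rewrite (eq_bigl (fun w => w == b)) ?big_pred1_eq // => w; rewrite /= eq_le andbC.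
Qed.

End Incidence3.

Section Derivation.
Variables (disp : Order.disp_t) (P : finPOrderType disp) (R : comPzRingType).
Local Notation I := (I3 P R).
Variable D : I -> I.
Hypothesis derD : is_derivation D.

Lemma derivationD (f g : I) : D (f + g) = D f + D g.
Proof. by rewrite -[f]scale1r derD.1 !scale1r. Qed.

Lemma derivation0 : D 0 = 0.
Proof. by apply: (@addrI _ (D 0)); rewrite -derivationD !addr0. Qed.

Lemma derivation_sum (T : Type) (s : seq T) (Q : pred T) (F : T -> I) :
  D (\sum_(i <- s | Q i) F i) = \sum_(i <- s | Q i) D (F i).
Proof. exact: (big_morph D derivationD derivation0). Qed.

Lemma derivationM (f g : I) : D (mul3 f g) = mul3 (D f) g + mul3 f (D g).
Proof. exact: derD.2. Qed.

Lemma at3_De3_mid (a b c p q r : P) : a <= b -> b <= c -> q != b ->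
  at3 (D (e3 R a b c)) p q r = 0.
Proof.
move=> le_ab le_bc ne_qb; rewrite -(e3_factor R le_ab le_bc) derivationM at3D.
rewrite at3_mul3_e3r ?lexx // at3_mul3_e3l ?lexx // -eq_le [b == q]eq_sym (negbTE ne_qb).
by rewrite !andbF addr0.
Qed.

Lemma at3_De3_corner (a c : P) : a <= c ->
  at3 (D (e3 R a a c)) a a c = 0 /\ at3 (D (e3 R a c c)) a c c = 0.
Proof.
move=> le_ac; set al := at3 (D _) a a c; set be := at3 (D _) a c c.
have leibniz w : a <= w <= c ->
    at3 (D (mul3 (e3 R a a c) (e3 R a c c))) a w c = al + be.
  move=> /andP[le_aw le_wc].
  by rewrite derivationM at3D at3_mul3_e3r ?lexx // at3_mul3_e3l ?lexx // !eqxx le_aw le_wc.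
have via_sum w : a <= w <= c ->
    at3 (D (mul3 (e3 R a a c) (e3 R a c c))) a w c = at3 (D (e3 R a w c)) a w c.
  move=> range_w; rewrite mul3_e3 ?lexx // derivation_sum at3_sum (bigD1 w) //=.
  rewrite big1 ?addr0 // => v /andP[/andP[le_av le_vc] ne_vw].
  by rewrite at3_De3_mid // eq_sym.
have range_a : a <= a <= c by rewrite lexx le_ac.
have range_c : a <= c <= c by rewrite lexx le_ac.
split.
  by apply: (@addIr _ be); rewrite add0r -(leibniz c range_c) via_sum.
by apply: (@addrI _ al); rewrite addr0 -(leibniz a range_a) via_sum.
Qed.

Lemma at3_De3_left (x z p : P) : x <= z -> at3 (D (e3 R x z z)) p z z = 0.
Proof.
move=> le_xz; have [->|ne_px] := eqVneq p x; first exact: (at3_De3_corner le_xz).2.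
have [le_pz|nle_pz] := boolP (p <= z); last by rewrite at3_nchain // negb_and nle_pz.
have vanish : mul3 (e3 R p p z) (e3 R x z z) = 0.
  by rewrite mul3_e3_eq0 ?lexx // xpair_eqE (negbTE ne_px).
have mid0 : at3 (D (e3 R p p z)) p x z = 0 by rewrite at3_De3_mid // eq_sym.
have := congr1 (fun f => at3 (D f) p p z) vanish.
rewrite derivationM derivation0 at30 at3D at3_mul3_e3r ?lexx // at3_mul3_e3l ?lexx //.
by rewrite mid0 if_same add0r eqxx le_pz.
Qed.

Lemma at3_De3_right (z y r : P) : z <= y -> at3 (D (e3 R z z y)) z z r = 0.
Proof.
move=> le_zy; have [->|ne_ry] := eqVneq r y; first exact: (at3_De3_corner le_zy).1.
have [le_zr|nle_zr] := boolP (z <= r); last by rewrite at3_nchain // negb_and nle_zr orbT.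
have vanish : mul3 (e3 R z z y) (e3 R z r r) = 0.
  by rewrite mul3_e3_eq0 ?lexx // xpair_eqE [y == r]eq_sym (negbTE ne_ry) andbF.
have mid0 : at3 (D (e3 R z r r)) z y r = 0 by rewrite at3_De3_mid // eq_sym.
have := congr1 (fun f => at3 (D f) z r r) vanish.
rewrite derivationM derivation0 at30 at3D at3_mul3_e3r ?lexx // at3_mul3_e3l ?lexx //.
by rewrite mid0 if_same addr0 eqxx le_zr.
Qed.

Lemma derivation_e3_eq0 (x z y : P) : x <= z -> z <= y -> D (e3 R x z y) = 0.
Proof.
move=> le_xz le_zy; apply: eq_at3 => p q r.
rewrite at30 -(e3_factor R le_xz le_zy) derivationM at3D.
rewrite at3_mul3_e3r ?lexx // at3_mul3_e3l ?lexx //.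
by rewrite at3_De3_left // at3_De3_right // !if_same addr0.
Qed.

End Derivation.

Theorem corollary4p6 (d : Order.disp_t) (P : finPOrderType d) (R : comPzRingType)
  (D : I3 P R -> I3 P R) :
  is_derivation D ->
  forall x z y : P, (x < z)%O -> (z < y)%O -> D (e3 R x z y) = 0.
Proof.
by move=> derD x z y /ltW le_xz /ltW le_zy; apply: derivation_e3_eq0.
Qed.
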